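(* Let $x,y\in\mathrm{Cay}$. The following are equivalent: (1) $[x]\ge[y]$; (2) for each $x'\in[x]$ there exists $y'\in[y]$ such that $x'\ge y'$.
   Context: A Cayley permutation is a word of positive integers in which every integer from $1$ to its maximum occurs; $\mathrm{Cay}$ is the set of all of them. Containment $y\le x$: indices $i_1<\dots<i_k$ ($k$ the length of $y$) with $x(i_s)<x(i_t)\iff y(s)<y(t)$ and $x(i_s)=x(i_t)\iff y(s)=y(t)$. For $x$ of length $n$, $\gamma(x)$ is the permutation obtained by sorting the pairs $(x(i),i)$ increasingly by first coordinate, ties by decreasing second coordinate, and reading the second coordinates. $x\sim y$ iff $\gamma(x)=\gamma(y)$; $[x]$ is the class of $x$. For classes, $[x]\ge[y]$ iff $x'\ge y'$ for some $x'\in[x]$ and $y'\in[y]$. *)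

From mathcomp Require Import all_boot.
Set Implicit Arguments. Unset Strict Implicit. Unset Printing Implicit Defensive.

(* Words of positive integers are represented as [seq nat]; positions are
   0-based internally (x(i) is [nth 0 x i]). *)

Definition is_cay (x : seq nat) : Prop :=
  all (fun a => 0 < a) x /\ forall k, 1 <= k <= \max_(a <- x) a -> k \in x.

Definition contains (x y : seq nat) : Prop :=
  exists idx : seq nat,
    [/\ size idx = size y, sorted ltn idx, all (fun i => i < size x) idx &
      forall s t, s < size y -> t < size y ->
        ((nth 0 x (nth 0 idx s) < nth 0 x (nth 0 idx t)) = (nth 0 y s < nth 0 y t))
        /\ ((nth 0 x (nth 0 idx s) == nth 0 x (nth 0 idx t)) = (nth 0 y s == nth 0 y t))].

Definition gamma_rel (p q : nat * nat) : bool :=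
  (p.1 < q.1) || ((p.1 == q.1) && (q.2 <= p.2)).

Definition gamma (x : seq nat) : seq nat :=
  map snd (sort gamma_rel (zip x (iota 1 (size x)))).

Definition in_class (x x' : seq nat) : Prop := is_cay x' /\ gamma x' = gamma x.

Definition class_ge (x y : seq nat) : Prop :=
  exists x' y', [/\ in_class x x', in_class y y' & contains x' y'].

From mathcomp Require Import all_boot.

Set Implicit Arguments.
Unset Strict Implicit.
Unset Printing Implicit Defensive.

(* gamma x lists the positions of x in the total order [gamma_le x]; hence
   gamma x = gamma x' says exactly that x and x' order their positions alike,
   and this order restricts along subwords.  So if x0 ~ x contains y0 at the
   positions idx, then for any x' ~ x the subword of x' at idx has the same
   gamma as y0, and so has its standardization, a Cayley permutation that x'
   contains at idx. *)

Definition gamma_le (a : seq nat) : rel nat := fun i j =>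
  (nth 0 a i < nth 0 a j) || ((nth 0 a i == nth 0 a j) && (j <= i)).

Definition same_pattern (a b : seq nat) : Prop :=
  size a = size b /\
  {in gtn (size a) &, forall s t,
    (nth 0 a s < nth 0 a t) = (nth 0 b s < nth 0 b t) /\
    (nth 0 a s == nth 0 a t) = (nth 0 b s == nth 0 b t)}.

Definition std (w : seq nat) : seq nat :=
  map (fun v => (index v (sort leq (undup w))).+1) w.

Section GammaOrder.

Variable a : seq nat.

Lemma gamma_le_refl : reflexive (gamma_le a).
Proof. by move=> i; rewrite /gamma_le eqxx leqnn orbT. Qed.

Lemma gamma_le_trans : transitive (gamma_le a).
Proof.
move=> j i k; rewrite /gamma_le.
case/orP=> [lt_ij|/andP[/eqP eq_ij le_ji]]; case/orP=> [lt_jk|/andP[/eqP eq_jk le_kj]].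
- by rewrite (ltn_trans lt_ij lt_jk).
- by rewrite -eq_jk lt_ij.
- by rewrite eq_ij lt_jk.
- by rewrite eq_ij eq_jk eqxx (leq_trans le_kj le_ji) orbT.
Qed.

Lemma gamma_le_total : total (gamma_le a).
Proof.
by move=> i j; rewrite /gamma_le; case: ltngtP => //= _; apply: leq_total.
Qed.

Lemma gamma_le_anti : antisymmetric (gamma_le a).
Proof.
by move=> i j; rewrite /gamma_le; case: ltngtP => //= _ /anti_leq.
Qed.

End GammaOrder.

Lemma gamma_sort a : gamma a = map succn (sort (gamma_le a) (iota 0 (size a))).
Proof.
rewrite /gamma.
have -> : zip a (iota 1 (size a)) = map (fun i => (nth 0 a i, i.+1)) (iota 0 (size a)).
  rewrite -{1}(mkseq_nth 0 a) /mkseq (iotaDl 1 0).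
  by elim: (iota 0 (size a)) => //= i s ->.
by rewrite sort_map -map_comp.
Qed.

Lemma size_gamma a : size (gamma a) = size a.
Proof. by rewrite gamma_sort size_map size_sort size_iota. Qed.

Lemma sorted_leq_indexE {T : eqType} {leT : rel T} {s : seq T} :
  reflexive leT -> transitive leT -> antisymmetric leT -> sorted leT s ->
  {in s &, forall x y, leT x y = (index x s <= index y s)}.
Proof.
move=> leT_refl leT_tr leT_anti s_sorted x y xs ys.
apply/idP/idP; last exact: (sorted_leq_index leT_tr leT_refl s_sorted).
rewrite leqNgt; apply: contraL => lt_yx; apply/negP => le_xy.
have le_yx := sorted_ltn_index leT_tr s_sorted y x ys xs lt_yx.
by move: lt_yx; rewrite (leT_anti x y) ?le_xy ?le_yx // ltnn.
Qed.

Lemma gamma_eqP a b :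
  gamma a = gamma b <->
  size a = size b /\ {in gtn (size a) &, gamma_le a =2 gamma_le b}.
Proof.
set sa := sort (gamma_le a) (iota 0 (size a)).
have sa_sorted : sorted (gamma_le a) sa by apply/sort_sorted/gamma_le_total.
have mem_sa i : (i \in sa) = (i < size a) by rewrite mem_sort mem_iota.
split=> [eq_ab | [eq_size eq_le]].
  have eq_size : size a = size b by rewrite -size_gamma eq_ab size_gamma.
  split=> // i j; rewrite !inE -!mem_sa => i_sa j_sa.
  have /(inj_map succn_inj) eq_sort : map succn sa = map succn
      (sort (gamma_le b) (iota 0 (size a))) by rewrite -gamma_sort eq_ab gamma_sort eq_size.
  have sb_sorted : sorted (gamma_le b) sa.
    by rewrite eq_sort; apply/sort_sorted/gamma_le_total.
  rewrite (sorted_leq_indexE (@gamma_le_refl a) (@gamma_le_trans a)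
            (@gamma_le_anti a) sa_sorted) //.
  by rewrite (sorted_leq_indexE (@gamma_le_refl b) (@gamma_le_trans b)
            (@gamma_le_anti b) sb_sorted).
rewrite !gamma_sort -eq_size; congr (map _ _).
apply: (sorted_eq (@gamma_le_trans a) (@gamma_le_anti a)) => //.
- rewrite (@eq_in_sorted _ [in sa] _ (gamma_le b)); first exact/sort_sorted/gamma_le_total.
    by move=> i j; rewrite !mem_sa; apply: eq_le.
  by apply/allP => i; rewrite mem_sa mem_sort mem_iota.
- by rewrite perm_sort perm_sym perm_sort.
Qed.

Lemma gamma_le_subword a idx : sorted ltn idx ->
  {in gtn (size idx) &, forall s t,
    gamma_le (map (nth 0 a) idx) s t = gamma_le a (nth 0 idx s) (nth 0 idx t)}.
Proof.
move=> idx_sorted s t s_idx t_idx; rewrite /gamma_le !(nth_map 0) //.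
by rewrite (leq_mono_in (sorted_ltn_nth ltn_trans 0 idx_sorted)).
Qed.

Lemma gamma_subword a b idx :
  gamma a = gamma b -> sorted ltn idx -> all (gtn (size a)) idx ->
  gamma (map (nth 0 a) idx) = gamma (map (nth 0 b) idx).
Proof.
move=> /gamma_eqP[eq_size eq_le] idx_sorted /all_nthP idx_a.
apply/gamma_eqP; rewrite !size_map; split=> // s t s_idx t_idx.
by rewrite !gamma_le_subword // eq_le //; apply: idx_a.
Qed.

Lemma same_pattern_gamma a b : same_pattern a b -> gamma a = gamma b.
Proof.
case=> eq_size eq_cmp; apply/gamma_eqP; split=> // s t s_a t_a.
by rewrite /gamma_le; have [-> ->] := eq_cmp s t s_a t_a.
Qed.

Lemma containsE x y :
  contains x y <->
  exists2 idx, sorted ltn idx && all (gtn (size x)) idx &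
               same_pattern (map (nth 0 x) idx) y.
Proof.
split=> [[idx [size_idx idx_sorted idx_x eq_cmp]] | [idx /andP[idx_sorted idx_x]]].
  exists idx; first by rewrite idx_sorted.
  split=> [|s t]; rewrite size_map // => s_idx t_idx.
  by rewrite !(nth_map 0) //; apply: eq_cmp; rewrite -size_idx.
case; rewrite size_map => size_idx eq_cmp; exists idx; split=> // s t s_y t_y.
by rewrite -!(nth_map 0 0 (nth 0 x)) ?size_idx //; apply: eq_cmp; rewrite inE size_idx.
Qed.

Lemma same_pattern_map (w : seq nat) f :
  {in w &, {mono f : u v / u < v}} -> same_pattern w (map f w).
Proof.
move=> f_mono; rewrite /same_pattern size_map; split=> // s t s_w t_w.
have f_le : {in w &, {mono f : u v / u <= v}}.
  by move=> u v u_w v_w; rewrite leqNgt f_mono // -leqNgt.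
by rewrite !(nth_map 0) // f_mono ?mem_nth // !eqn_leq !f_le ?mem_nth.
Qed.

Section Standardization.

Variable w : seq nat.

Let d := sort leq (undup w).

Lemma std_mono : {in w &, {mono (fun v => (index v d).+1) : u v / u < v}}.
Proof.
have d_sorted : sorted leq d by apply: (sort_sorted leq_total).
have mem_d z : (z \in d) = (z \in w) by rewrite mem_sort mem_undup.
move=> u v; rewrite -!mem_d => u_d v_d; rewrite ltnS !ltnNge.
by rewrite (sorted_leq_indexE leqnn leq_trans anti_leq d_sorted v_d u_d).
Qed.

Lemma same_pattern_std : same_pattern w (std w).
Proof. exact: same_pattern_map std_mono. Qed.

Lemma std_cay : is_cay (std w).
Proof.
split; first by apply/allP => v /mapP[u _ ->].
move=> k /andP[k_gt0 k_max].
have max_d : \max_(a <- std w) a <= size d.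
  by apply/bigmax_leqP_seq => _ /mapP[u u_w ->] _; rewrite index_mem mem_sort mem_undup.
have k_d : k.-1 < size d by rewrite prednK // (leq_trans k_max).
apply/mapP; exists (nth 0 d k.-1).
  by rewrite -mem_undup -(mem_sort leq) mem_nth.
have d_uniq : uniq d by rewrite sort_uniq undup_uniq.
by rewrite index_uniq // prednK.
Qed.

End Standardization.

Theorem lemma4p14 (x y : seq nat) :
  is_cay x -> is_cay y ->
  (class_ge x y <->
   forall x', in_class x x' -> exists y', in_class y y' /\ contains x' y').
Proof.
move=> cay_x _; split=> [[x0 [y0 [[_ gx0] [_ gy0] /containsE x0_y0]]] x' [_ gx'] | ge_x].
  have {}gx' : gamma x' = gamma x0 by rewrite gx' gx0.
  have size_x' : size x' = size x0 by rewrite -size_gamma gx' size_gamma.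
  case: x0_y0 => idx /andP[idx_sorted idx_x0] pat_y0.
  have idx_x' : all (gtn (size x')) idx by rewrite size_x'.
  set w := map (nth 0 x') idx.
  exists (std w); split; last first.
    by apply/containsE; exists idx; [rewrite idx_sorted | exact: same_pattern_std].
  split; first exact: std_cay.
  rewrite -gy0 -(same_pattern_gamma (same_pattern_std w)) -(same_pattern_gamma pat_y0).
  exact: gamma_subword.
have [y' [in_y' x_y']] := ge_x x (conj cay_x erefl).
by exists x, y'.
Qed.
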